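(* In the setting described in the context, the two-stage robust problem $w^*=\min_{x\in\mathcal X}c_1x+\max_{u\in\mathcal U(x)}\min_{y\in\mathcal Y(x,u)}c_2y$ is equivalent to the problem $\min c_1x+\eta$ over $x\in\mathcal X$, $\eta$, and, for each $\pi\in\mathcal P_\Pi$, vectors $u^\pi,y^\pi$, and for each $\gamma\in\mathcal R_\Pi$, vectors $v^\gamma,y^\gamma$, subject to: for all $\pi\in\mathcal P_\Pi$: $\eta\ge c_2y^\pi$, $y^\pi\in\mathcal Y(x,u^\pi)$, $u^\pi\in\arg\max\{(-Eu)^\intercal\pi: u\in\mathcal U(x)\}$; for all $\gamma\in\mathcal R_\Pi$: $y^\gamma\in\mathcal Y(x,v^\gamma)$, $v^\gamma\in\arg\max\{(-Ev)^\intercal\gamma: v\in\mathcal U(x)\}$; in particular this problem has optimal value $w^*$. The same holds when each argmax condition is replaced by the KKT optimality conditions of the corresponding linear program (yielding a single-level problem).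
   Context: $\mathcal X=\{x\in\mathbb Z^{m_x}_+\times\mathbb R^{n_x}_+: Ax\ge b\}$, $\mathcal U(x)=\{u\in\mathbb R^{n_u}_+: F(x)u\le h+Gx\}$ with $F(x)$ a matrix depending on $x$, $\mathcal Y(x,u)=\{y\in\mathbb R^{n_y}_+: B_2y\ge d-B_1x-Eu\}$. $\Pi=\{\pi\ge 0: B_2^\intercal\pi\le c_2^\intercal\}$, with finite sets of extreme points $\mathcal P_\Pi$ and extreme rays $\mathcal R_\Pi$. The optimal value of an infeasible minimization (maximization) problem is $+\infty$ ($-\infty$). Standing assumptions: (A1) $\mathcal U(x)\ne\emptyset$ for all $x\in\mathcal X$; (A2) $\mathcal U(x)$ is bounded for all $x\in\mathcal X$; (A3) $\min\{c_1x+c_2y: x\in\mathcal X,u\in\mathcal U(x),y\in\mathcal Y(x,u)\}$ has a finite optimal value. Two formulations are called equivalent if they have the same optimal value and any optimal first-stage solution of one is optimal for the other, and vice versa. *)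

From HB Require Import structures.
From mathcomp Require Import all_boot all_order all_algebra.
From mathcomp Require Import classical_sets reals constructive_ereal ereal.
Unset Printing Implicit Defensive.
Import Order.TTheory GRing.Theory Num.Theory.
Local Open Scope ring_scope.
Local Open Scope classical_set_scope.

(* Problem data.  x lives in 'cV_(mx + nx): first mx coordinates integer,
   last nx continuous.  Constraint rows: mA for X, mU for U(x), mY for Y(x,u). *)
Record data (R : realType) := Data {
  mx : nat; nx : nat; nu : nat; ny : nat; mA : nat; mU : nat; mY : nat;
  A : 'M[R]_(mA, mx + nx); b : 'cV[R]_mA;
  F : 'cV[R]_(mx + nx) -> 'M[R]_(mU, nu); h : 'cV[R]_mU; G : 'M[R]_(mU, mx + nx);
  B1 : 'M[R]_(mY, mx + nx); B2 : 'M[R]_(mY, ny); E : 'M[R]_(mY, nu); d : 'cV[R]_mY;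
  c1 : 'rV[R]_(mx + nx); c2 : 'rV[R]_ny }.
Arguments mx {R}. Arguments nx {R}. Arguments nu {R}. Arguments ny {R}. Arguments mA {R}. Arguments mU {R}. Arguments mY {R}.
Arguments A {R}. Arguments b {R}. Arguments F {R}. Arguments h {R}. Arguments G {R}.
Arguments B1 {R}. Arguments B2 {R}. Arguments E {R}. Arguments d {R}. Arguments c1 {R}. Arguments c2 {R}.

Section Defs.
Context {R : realType}.

Definition vle {n} (a b : 'cV[R]_n) := forall i, a i 0 <= b i 0.
Definition sc {n} (a : 'rV[R]_n) (v : 'cV[R]_n) : R := (a *m v) 0 0.
Definition ip {n} (a v : 'cV[R]_n) : R := (a^T *m v) 0 0.

Definition extreme_point {n} (S : set 'cV[R]_n) (p : 'cV[R]_n) :=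
  S p /\ forall p1 p2 (t : R), S p1 -> S p2 -> 0 < t < 1 ->
    p = t *: p1 + (1 - t) *: p2 -> p1 = p2.

Definition extreme_ray {n} (C : set 'cV[R]_n) (g : 'cV[R]_n) :=
  [/\ C g, g != 0 & forall g1 g2, C g1 -> C g2 -> g = g1 + g2 ->
      (exists2 t1 : R, 0 <= t1 & g1 = t1 *: g) /\
      (exists2 t2 : R, 0 <= t2 & g2 = t2 *: g)].

Variable D : data R.

Definition Xset : set 'cV[R]_(mx D + nx D) :=
  [set x | [/\ vle 0 x,
     (forall i : 'I_(mx D), x (lshift (nx D) i) 0 \is a Num.int) &
     vle (b D) (A D *m x)]].

Definition Uset (x : 'cV[R]_(mx D + nx D)) : set 'cV[R]_(nu D) :=
  [set u | vle 0 u /\ vle (F D x *m u) (h D + G D *m x)].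

Definition Yset (x : 'cV[R]_(mx D + nx D)) (u : 'cV[R]_(nu D)) : set 'cV[R]_(ny D) :=
  [set y | vle 0 y /\ vle (d D - B1 D *m x - E D *m u) (B2 D *m y)].

Definition Pi : set 'cV[R]_(mY D) :=
  [set p | vle 0 p /\ vle ((B2 D)^T *m p) (c2 D)^T].

(* recession cone of Pi; the extreme rays of Pi are those of this cone *)
Definition recPi : set 'cV[R]_(mY D) :=
  [set g | vle 0 g /\ vle ((B2 D)^T *m g) 0].

(* second-stage value  min { c2 y : y in Y(x,u) }  (+oo if infeasible) *)
Definition Qval x u : \bar R := ereal_inf [set (sc (c2 D) y)%:E | y in Yset x u].
(* max_{u in U(x)} Q(x,u)  (-oo if U(x) empty) *)
Definition Phi x : \bar R := ereal_sup [set Qval x u | u in Uset x].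
Definition wstar : \bar R := ereal_inf [set (sc (c1 D) x)%:E + Phi x | x in Xset].

Definition robust_opt x :=
  [/\ Xset x, (sc (c1 D) x)%:E + Phi x = wstar & wstar \is a fin_num].

(* value of the joint problem of (A3) *)
Definition joint_value : \bar R :=
  ereal_inf [set (sc (c1 D) t.1 + sc (c2 D) t.2.2)%:E | t in
     [set t | [/\ Xset t.1, Uset t.1 t.2.1 & Yset t.1 t.2.1 t.2.2]]].

Definition lobj (p : 'cV[R]_(mY D)) (u : 'cV[R]_(nu D)) : R := ip (- (E D *m u)) p.

Definition in_argmax x p u :=
  Uset x u /\ forall u', Uset x u' -> lobj p u' <= lobj p u.

(* KKT conditions of  max { (-E u)^T p : F(x) u <= h + G x, u >= 0 }
   with multipliers lam (for F(x) u <= h + G x) and mu (for u >= 0). *)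
Definition kkt x (p : 'cV[R]_(mY D)) (u : 'cV[R]_(nu D))
    (lam : 'cV[R]_(mU D)) (mu : 'cV[R]_(nu D)) :=
  [/\ vle 0 u /\ vle (F D x *m u) (h D + G D *m x),
      vle 0 lam /\ vle 0 mu,
      (F D x)^T *m lam - mu = - ((E D)^T *m p),
      (forall i, lam i 0 * (h D + G D *m x - F D x *m u) i 0 = 0) &
      (forall j, mu j 0 * u j 0 = 0)].

Definition ref_feas (PP RR : seq 'cV[R]_(mY D)) x (eta : R) :=
  Xset x /\
  exists (up : 'cV[R]_(mY D) -> 'cV[R]_(nu D)) (yp : 'cV[R]_(mY D) -> 'cV[R]_(ny D))
         (vg : 'cV[R]_(mY D) -> 'cV[R]_(nu D)) (yg : 'cV[R]_(mY D) -> 'cV[R]_(ny D)),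
    (forall p, p \in PP ->
       [/\ sc (c2 D) (yp p) <= eta, Yset x (up p) (yp p) & in_argmax x p (up p)]) /\
    (forall g, g \in RR -> Yset x (vg g) (yg g) /\ in_argmax x g (vg g)).

Definition ref_feas_kkt (PP RR : seq 'cV[R]_(mY D)) x (eta : R) :=
  Xset x /\
  exists (up : 'cV[R]_(mY D) -> 'cV[R]_(nu D)) (yp : 'cV[R]_(mY D) -> 'cV[R]_(ny D))
         (lp : 'cV[R]_(mY D) -> 'cV[R]_(mU D)) (mp : 'cV[R]_(mY D) -> 'cV[R]_(nu D))
         (vg : 'cV[R]_(mY D) -> 'cV[R]_(nu D)) (yg : 'cV[R]_(mY D) -> 'cV[R]_(ny D))
         (lg : 'cV[R]_(mY D) -> 'cV[R]_(mU D)) (mg : 'cV[R]_(mY D) -> 'cV[R]_(nu D)),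
    (forall p, p \in PP ->
       [/\ sc (c2 D) (yp p) <= eta, Yset x (up p) (yp p) & kkt x p (up p) (lp p) (mp p)]) /\
    (forall g, g \in RR -> Yset x (vg g) (yg g) /\ kkt x g (vg g) (lg g) (mg g)).

Definition ref_value (feas : 'cV[R]_(mx D + nx D) -> R -> Prop) : \bar R :=
  ereal_inf [set (sc (c1 D) xe.1 + xe.2)%:E | xe in [set xe | feas xe.1 xe.2]].

Definition ref_opt (feas : 'cV[R]_(mx D + nx D) -> R -> Prop) x :=
  exists eta : R, feas x eta /\ (sc (c1 D) x + eta)%:E = ref_value feas.

End Defs.

(* By LP duality, the second-stage value min { c2 y : y in Y(x,u) } equals
   max { (d - B1 x - E u)^T pi : pi in Pi }: it is +oo exactly when
   (d - B1 x - E u)^T gamma > 0 for some extreme ray gamma of Pi, and otherwise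
   it is attained at an extreme point of Pi (or is -oo if Pi is empty).  Since u
   enters only through the term (-E u)^T pi, the maximum over u in U(x) can be
   taken separately for each extreme point and each extreme ray, by a maximizer
   u^pi resp. v^gamma.  Hence (x, eta) is feasible in the reformulation iff
   max_(u in U(x)) Q(x, u) <= eta, which gives equal values and optimal
   solutions.  When U(x) is nonempty and bounded the KKT conditions of the inner
   linear programs characterize their maximizers, whence the single-level
   version.  Farkas' lemma is obtained by Fourier-Motzkin elimination. *)

From HB Require Import structures.
From mathcomp Require Import all_boot all_order all_algebra.
From mathcomp Require Import classical_sets reals constructive_ereal ereal.
From mathcomp Require Import boolp ring lra.
Import Order.TTheory GRing.Theory Num.Theory.
Local Open Scope ring_scope.
Local Open Scope classical_set_scope.

Section FourierMotzkin.
Context {R : realFieldType}.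
Implicit Types (a : nat -> R) (L : list ((nat -> R) * R)).

(* A pair [(a, b)] stands for the inequality [\sum_(j < n) a j * z j <= b];
   coefficients are indexed by [nat] so that one system can be read with any
   number [n] of variables, which decreases during elimination. *)
Definition lin_form n a (z : nat -> R) := \sum_(j < n) a j * z j.

Inductive nonneg_comb L : (nat -> R) -> R -> Prop :=
| NCmem a b : List.In (a, b) L -> nonneg_comb L a b
| NC0 : nonneg_comb L (fun _ => 0) 0
| NCD a b a' b' : nonneg_comb L a b -> nonneg_comb L a' b' ->
    nonneg_comb L (fun j => a j + a' j) (b + b')
| NCZ t a b : 0 <= t -> nonneg_comb L a b -> nonneg_comb L (fun j => t * a j) (t * b).

Definition ineq_solvable n L :=
  exists z, forall a b, List.In (a, b) L -> lin_form n a z <= b.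

Definition ineq_refutable n L :=
  exists a b, [/\ nonneg_comb L a b, forall j, (j < n)%N -> a j = 0 & b < 0].

Lemma nonneg_comb_trans L L' a b :
  (forall a b, List.In (a, b) L' -> nonneg_comb L a b) ->
  nonneg_comb L' a b -> nonneg_comb L a b.
Proof. by move=> L'L; elim=> *; [exact: L'L | exact: NC0 | exact: NCD | exact: NCZ]. Qed.

Lemma nonneg_comb_coord0 L k a b : (forall a b, List.In (a, b) L -> a k = 0) ->
  nonneg_comb L a b -> a k = 0.
Proof.
move=> Lk0; elim => //= [a1 b1 a2 b2 _ -> _ ->|t a1 b1 _ _ ->].
- exact: addr0.
- exact: mulr0.
Qed.

Lemma exists_between (T : Type) (P N : list T) (f g : T -> R) :
  (forall p q, List.In p P -> List.In q N -> g q <= f p) ->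
  exists t, (forall p, List.In p P -> t <= f p) /\ (forall q, List.In q N -> g q <= t).
Proof.
elim: N => [_|q N IH gf].
  elim: P => [|p P [t [tP _]]]; first by exists 0.
  exists (Num.min (f p) t); split=> // p' [<-|/tP tp']; first by rewrite ge_min lexx.
  by rewrite ge_min tp' orbT.
have [t [tP tN]] := IH (fun p q' Hp Hq' => gf p q' Hp (or_intror Hq')).
exists (Num.max (g q) t); split=> [p Hp|q' [<-|/tN q't]].
- by rewrite ge_max tP // gf //; left.
- by rewrite le_max lexx.
- by rewrite le_max q't orbT.
Qed.

(* The combination of [p] (with [p.1 k > 0]) and [q] (with [q.1 k < 0]) with
   nonnegative weights in which the variable [k] cancels. *)
Definition eliminate (k : nat) (p q : (nat -> R) * R) : (nat -> R) * R :=
  (fun j => p.1 k * q.1 j + (- q.1 k) * p.1 j, p.1 k * q.2 + (- q.1 k) * p.2).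

Lemma lin_form_eliminate n k p q z : lin_form n (eliminate k p q).1 z =
  p.1 k * lin_form n q.1 z + (- q.1 k) * lin_form n p.1 z.
Proof. by rewrite /lin_form /= !mulr_sumr -big_split /=; apply: eq_bigr => j _; ring. Qed.

Section EliminationStep.
Variables (n : nat) (L : list ((nat -> R) * R)).

Let pos := List.filter (fun r : (nat -> R) * R => 0 < r.1 n) L.
Let neg := List.filter (fun r : (nat -> R) * R => r.1 n < 0) L.
Let zero := List.filter (fun r : (nat -> R) * R => r.1 n == 0) L.
Definition eliminated := zero ++ List.flat_map (fun p => List.map (eliminate n p) neg) pos.

Lemma eliminatedP a b : List.In (a, b) eliminated ->
  (List.In (a, b) L /\ a n = 0) \/
  exists p q, [/\ List.In p pos, List.In q neg & (a, b) = eliminate n p q].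
Proof.
rewrite List.in_app_iff => -[|].
  by rewrite List.filter_In => -[? /eqP]; left.
rewrite List.in_flat_map => -[p [Hp]]; rewrite List.in_map_iff => -[q [Hq Hpq]].
by right; exists p, q.
Qed.

Lemma eliminate_mem p q : List.In p pos -> List.In q neg ->
  List.In (eliminate n p q) eliminated.
Proof.
move=> Hp Hq; rewrite List.in_app_iff List.in_flat_map; right; exists p; split => //.
by rewrite List.in_map_iff; exists q.
Qed.

Lemma eliminate_comb p q a b : List.In p pos -> List.In q neg ->
  (a, b) = eliminate n p q -> nonneg_comb L a b.
Proof.
rewrite !List.filter_In => -[Lp p_gt0] [Lq q_lt0] [-> ->].
apply: NCD; apply: NCZ; rewrite ?oppr_ge0 ?ltW //.
- by case: q Lq {q_lt0} => ? ? ?; exact: NCmem.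
- by case: p Lp {p_gt0} => ? ? ?; exact: NCmem.
Qed.

Lemma refutable_eliminated : ineq_refutable n eliminated -> ineq_refutable n.+1 L.
Proof.
move=> [a [b [comb a0 b_lt0]]]; exists a, b; split => //.
  apply: nonneg_comb_trans comb => a1 b1 /eliminatedP [[? _]|[p [q [Hp Hq]]]].
    exact: NCmem.
  exact: eliminate_comb.
move=> j; rewrite ltnS leq_eqVlt => /orP [/eqP ->|/a0 //].
apply: nonneg_comb_coord0 comb => a1 b1 /eliminatedP [[_ ->] //|[p [q [_ _ []]]]].
by move=> -> _ /=; ring.
Qed.

Lemma solvable_eliminated : ineq_solvable n eliminated -> ineq_solvable n.+1 L.
Proof.
move=> [z zE].
(* The rows in [pos] bound [z n] from above, those in [neg] from below, and
   the rows of [eliminated] say that these bounds are compatible. *)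
pose bound (r : (nat -> R) * R) := (r.2 - lin_form n r.1 z) / r.1 n.
have [t [t_pos t_neg]] : exists t, (forall p, List.In p pos -> t <= bound p) /\
    (forall q, List.In q neg -> bound q <= t).
  apply: exists_between => p q Hp Hq.
  have := zE (eliminate n p q).1 (eliminate n p q).2.
  rewrite -surjective_pairing lin_form_eliminate /= => /(_ (eliminate_mem _ _ Hp Hq)).
  move: Hp Hq; rewrite !List.filter_In /bound => -[_ p_gt0] [_ q_lt0].
  set ap := p.1 n in p_gt0 *; set aq := q.1 n in q_lt0 *.
  rewrite ler_pdivlMr // mulrAC ler_ndivrMr //.
  nra.
have lin_ext a : lin_form n.+1 a (fun j => if j == n then t else z j) = lin_form n a z + a n * t.
  rewrite /lin_form big_ord_recr /= eqxx; congr (_ + _).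
  by apply: eq_bigr => j _; rewrite ltn_eqF.
exists (fun j => if j == n then t else z j) => a b Lab; rewrite lin_ext.
have [an_lt0|an_gt0|an0] := ltrgtP (a n) 0.
- have := t_neg (a, b); rewrite List.filter_In /bound /= ler_ndivrMr // => /(_ (conj Lab an_lt0)).
  lra.
- have := t_pos (a, b); rewrite List.filter_In /bound /= ler_pdivlMr // => /(_ (conj Lab an_gt0)).
  lra.
- rewrite an0 mul0r addr0; apply: zE.
  by rewrite List.in_app_iff List.filter_In /= an0 eqxx; left.
Qed.
End EliminationStep.

Theorem fourier_motzkin n L : ineq_solvable n L \/ ineq_refutable n L.
Proof.
elim: n L => [|n IH] L.
  have [[a [b [Lab b_lt0]]]|no_neg] := EM (exists a b, List.In (a, b) L /\ b < 0).
    by right; exists a, b; split => //; exact: NCmem.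
  left; exists (fun _ => 0) => a b Lab; rewrite /lin_form big_ord0 leNgt.
  by apply/negP => b_lt0; apply: no_neg; exists a, b.
case: (IH (eliminated n L)).
- by move/solvable_eliminated; left.
- by move/refutable_eliminated; right.
Qed.

Lemma nonneg_comb_weights {I : finType} {f : I -> (nat -> R) * R} {a b} :
  nonneg_comb (List.map f (enum I)) a b ->
  exists w : I -> R, [/\ forall i, 0 <= w i,
    forall j, a j = \sum_i w i * (f i).1 j & b = \sum_i w i * (f i).2].
Proof.
elim.
- move=> a1 b1; rewrite List.in_map_iff => -[i [fi _]].
  exists (fun k => (k == i)%:R); split => [k|j|]; rewrite ?ler0n //.
    by rewrite (bigD1 i) //= eqxx mul1r big1 ?addr0 ?fi // => k /negbTE ->; rewrite mul0r.
  by rewrite (bigD1 i) //= eqxx mul1r big1 ?addr0 ?fi // => k /negbTE ->; rewrite mul0r.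
- by exists (fun _ => 0); split => [//|j|]; rewrite big1 // => i _; rewrite mul0r.
- move=> a1 b1 a2 b2 _ [w [w_ge0 aw bw]] _ [w' [w'_ge0 aw' bw']].
  exists (fun i => w i + w' i); split => [i|j|]; first by rewrite addr_ge0.
    by rewrite aw aw' -big_split; apply: eq_bigr => i _; rewrite mulrDl.
  by rewrite bw bw' -big_split; apply: eq_bigr => i _; rewrite mulrDl.
- move=> t a1 b1 t_ge0 _ [w [w_ge0 aw bw]].
  exists (fun i => t * w i); split => [i|j|]; first by rewrite mulr_ge0.
    by rewrite aw mulr_sumr; apply: eq_bigr => i _; rewrite mulrA.
  by rewrite bw mulr_sumr; apply: eq_bigr => i _; rewrite mulrA.
Qed.

End FourierMotzkin.

Section LinearProgramming.
Context {R : realType}.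

Lemma vle_ge0 {n} (y : 'cV[R]_n) : vle 0 y <-> forall j, 0 <= y j 0.
Proof. by split => H j; move: (H j); rewrite mxE. Qed.

Lemma subv_ge0 {n} (a b : 'cV[R]_n) : vle 0 (b - a) <-> vle a b.
Proof. by split => H i; move: (H i); rewrite !mxE subr_ge0. Qed.

Lemma subv_le0 {n} (a b : 'cV[R]_n) : vle (a - b) 0 <-> vle a b.
Proof. by split => H i; move: (H i); rewrite !mxE subr_le0. Qed.

Lemma vleN2 {n} (a b : 'cV[R]_n) : vle (- a) (- b) <-> vle b a.
Proof. by split => H i; move: (H i); rewrite !mxE lerN2. Qed.

Lemma oppv_le0 {n} (a : 'cV[R]_n) : vle (- a) 0 <-> vle 0 a.
Proof. by rewrite -{1}oppr0; exact: vleN2. Qed.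

Lemma vle_col_mx {m1 m2} (a b : 'cV[R]_m1) (a' b' : 'cV[R]_m2) :
  vle (col_mx a a') (col_mx b b') <-> vle a b /\ vle a' b'.
Proof.
split => [H|[H H'] i]; first by split => i; [move: (H (lshift m2 i))|move: (H (rshift m1 i))];
  rewrite ?col_mxEu ?col_mxEd.
by rewrite -(splitK i); case: (split i) => j /=; rewrite ?col_mxEu ?col_mxEd.
Qed.

Lemma vleZ {n} {s : R} {a b : 'cV[R]_n} : 0 <= s -> vle a b -> vle (s *: a) (s *: b).
Proof. by move=> s_ge0 H i; rewrite !mxE ler_wpM2l. Qed.

Lemma oppmx_entry {m n} (A : 'M[R]_(m, n)) i j : (- A) i j = - A i j.
Proof. by rewrite mxE. Qed.

Lemma mulmx_comb_entry {k n} (A : 'M[R]_(k, n)) (u v : 'cV[R]_n) (s t : R) i :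
  (A *m (s *: u + t *: v)) i 0 = s * (A *m u) i 0 + t * (A *m v) i 0.
Proof.
by rewrite mulmxDr -!scalemxAr [_ i 0]mxE [(s *: (A *m u)) i 0]mxE [(t *: (A *m v)) i 0]mxE.
Qed.

Lemma mulmx_addZ_entry {k n} (A : 'M[R]_(k, n)) (u v : 'cV[R]_n) (s : R) i :
  (A *m (u + s *: v)) i 0 = (A *m u) i 0 + s * (A *m v) i 0.
Proof. by rewrite -[u in LHS]scale1r mulmx_comb_entry mul1r. Qed.

Lemma ipE {n} (a v : 'cV[R]_n) : ip a v = \sum_i a i 0 * v i 0.
Proof. by rewrite /ip mxE; apply: eq_bigr => i _; rewrite mxE. Qed.

Lemma ipC {n} (a v : 'cV[R]_n) : ip a v = ip v a.
Proof. by rewrite !ipE; apply: eq_bigr => i _; rewrite mulrC. Qed.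

Lemma ipDr {n} (a u v : 'cV[R]_n) : ip a (u + v) = ip a u + ip a v.
Proof. by rewrite /ip mulmxDr mxE. Qed.

Lemma ipDl {n} (a b v : 'cV[R]_n) : ip (a + b) v = ip a v + ip b v.
Proof. by rewrite ipC ipDr -!(ipC v). Qed.

Lemma ipZr {n} (a v : 'cV[R]_n) (s : R) : ip a (s *: v) = s * ip a v.
Proof. by rewrite /ip -scalemxAr mxE. Qed.

Lemma ipZl {n} (a v : 'cV[R]_n) (s : R) : ip (s *: a) v = s * ip a v.
Proof. by rewrite ipC ipZr ipC. Qed.

Lemma ipNr {n} (a v : 'cV[R]_n) : ip a (- v) = - ip a v.
Proof. by rewrite -scaleN1r ipZr mulN1r. Qed.

Lemma ipNl {n} (a v : 'cV[R]_n) : ip (- a) v = - ip a v.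
Proof. by rewrite ipC ipNr ipC. Qed.

Lemma ip0r {n} (a : 'cV[R]_n) : ip a 0 = 0.
Proof. by rewrite /ip mulmx0 mxE. Qed.

Lemma ip0l {n} (v : 'cV[R]_n) : ip 0 v = 0.
Proof. by rewrite ipC ip0r. Qed.

Lemma ip_mulmx {m n} (M : 'M[R]_(m, n)) (y : 'cV[R]_n) (p : 'cV[R]_m) :
  ip (M *m y) p = ip (M^T *m p) y.
Proof. by rewrite [LHS]ipC /ip trmx_mul trmxK mulmxA. Qed.

Lemma ip_col_mx {m1 m2} (a b : 'cV[R]_m1) (a' b' : 'cV[R]_m2) :
  ip (col_mx a a') (col_mx b b') = ip a b + ip a' b'.
Proof. by rewrite /ip tr_col_mx mul_row_col mxE. Qed.

Lemma sc_ip {n} (c : 'rV[R]_n) (y : 'cV[R]_n) : sc c y = ip c^T y.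
Proof. by rewrite /sc /ip trmxK. Qed.

Lemma ip_ge0 {n} {a v : 'cV[R]_n} : vle 0 a -> vle 0 v -> 0 <= ip a v.
Proof.
by move=> /vle_ge0 a_ge0 /vle_ge0 v_ge0; rewrite ipE sumr_ge0 // => i _; rewrite mulr_ge0.
Qed.

Lemma ler_ip {n} {a b v : 'cV[R]_n} : vle a b -> vle 0 v -> ip a v <= ip b v.
Proof. by move=> /subv_ge0 ab v_ge0; rewrite -subr_ge0 -ipNl -ipDl ip_ge0. Qed.

Lemma ip_eq0_mul {n} {a v : 'cV[R]_n} : vle 0 a -> vle 0 v -> ip a v = 0 ->
  forall i, a i 0 * v i 0 = 0.
Proof.
move=> /vle_ge0 a_ge0 /vle_ge0 v_ge0; rewrite ipE => /psumr_eq0P sum0 i.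
by apply: sum0 => // j _; rewrite mulr_ge0.
Qed.

Lemma mem_In (T : eqType) (s : seq T) x : x \in s -> List.In x s.
Proof. by elim: s => //= y s IH; rewrite inE => /orP [/eqP ->|/IH]; [left|right]. Qed.

Lemma farkas_ineq {k n} (A : 'M[R]_(k, n)) (b : 'cV[R]_k) :
  (exists z, vle (A *m z) b) \/ (exists w, [/\ vle 0 w, A^T *m w = 0 & ip b w < 0]).
Proof.
pose coef (i : 'I_k) (j : nat) := if insub j is Some j' then A i j' else 0.
have coefE i (j : 'I_n) : coef i j = A i j by rewrite /coef valK.
pose L := List.map (fun i => (coef i, b i 0)) (enum 'I_k).
case: (fourier_motzkin n L) => [[z zL]|[a [be [comb a0 be_lt0]]]].
- left; exists (\col_j z j) => i; rewrite mxE.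
  have := zL (coef i) (b i 0); rewrite /lin_form List.in_map_iff.
  under eq_bigr do rewrite coefE.
  under [in X in _ -> X]eq_bigr do rewrite mxE.
  by apply; exists i; split; last exact/mem_In/mem_enum.
- have [w [w_ge0 aw bw]] := nonneg_comb_weights comb.
  right; exists (\col_i w i); split.
  + by apply/vle_ge0 => i; rewrite mxE.
  + apply/matrixP => j l; rewrite (ord1 l) !mxE -[RHS](a0 j (ltn_ord j)) aw.
    by apply: eq_bigr => i _; rewrite !mxE /= coefE mulrC.
  + rewrite ipE (_ : \sum_i _ = be) // bw.
    by apply: eq_bigr => i _; rewrite mxE mulrC.
Qed.

Lemma farkas {m n} (M : 'M[R]_(m, n)) (r : 'cV[R]_m) :
  ~ (exists y, vle 0 y /\ vle r (M *m y)) ->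
  exists g, [/\ vle 0 g, vle (M^T *m g) 0 & 0 < ip r g].
Proof.
move=> infeasible.
case: (farkas_ineq (- col_mx M 1%:M) (- col_mx r 0)) => [[y]|[w [w_ge0 Aw bw]]].
  rewrite mulNmx => /vleN2; rewrite mul_col_mx mul1mx => /vle_col_mx [My y_ge0].
  by case: infeasible; exists y.
rewrite -[w]vsubmxK in w_ge0 Aw bw; move: w_ge0; rewrite -col_mx0.
move=> /vle_col_mx [g_ge0 h_ge0]; exists (usubmx w); split => //.
- move: Aw; rewrite linearN /= tr_col_mx trmx1 mulNmx mul_row_col mul1mx.
  by move/eqP; rewrite oppr_eq0 addr_eq0 => /eqP ->; exact/oppv_le0.
- by move: bw; rewrite ipNl ip_col_mx ip0l addr0 oppr_lt0.
Qed.

Lemma weak_duality {m n} {M : 'M[R]_(m, n)} {y p rho kap} :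
  vle 0 y -> vle 0 p -> vle rho (M *m y) -> vle (M^T *m p) kap -> ip rho p <= ip kap y.
Proof.
move=> y_ge0 p_ge0 rhoM Mkap.
by rewrite (le_trans (ler_ip rhoM p_ge0)) // ip_mulmx ler_ip.
Qed.

Lemma unbounded_along_ray {m n} (M : 'M[R]_(m, n)) r c y0 e :
  vle 0 y0 -> vle r (M *m y0) -> vle 0 e -> vle 0 (M *m e) -> ip c e < 0 ->
  forall K, exists y, [/\ vle 0 y, vle r (M *m y) & ip c y < K].
Proof.
move=> /vle_ge0 y0_ge0 My0 /vle_ge0 e_ge0 /vle_ge0 Me ce_lt0 K.
pose s := (`|ip c y0 - K| + 1) / (- ip c e).
have s_ge0 : 0 <= s by rewrite divr_ge0 // ?oppr_ge0 ?ltW // addr_ge0.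
exists (y0 + s *: e); split.
- apply/vle_ge0 => i; rewrite !mxE.
  exact: addr_ge0 (y0_ge0 i) (mulr_ge0 s_ge0 (e_ge0 i)).
- move=> i; rewrite mulmx_addZ_entry.
  exact: ler_wpDr (mulr_ge0 s_ge0 (Me i)) (My0 i).
- rewrite ipDr ipZr (_ : s * _ = - (`|ip c y0 - K| + 1)).
    by have := ler_norm (ip c y0 - K); lra.
  by rewrite /s; field; rewrite lt_eqF.
Qed.

Lemma unbounded_of_dual_infeasible {m n} {M : 'M[R]_(m, n)} {r c} :
  (exists y, vle 0 y /\ vle r (M *m y)) -> ~ (exists p, vle 0 p /\ vle (M^T *m p) c) ->
  forall K, exists y, [/\ vle 0 y, vle r (M *m y) & ip c y < K].
Proof.
move=> [y0 [y0_ge0 My0]] dual_infeasible.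
have [e [e_ge0 Me ce]] : exists e, [/\ vle 0 e, vle ((- M^T)^T *m e) 0 & 0 < ip (- c) e].
  apply: farkas => -[p [p_ge0]]; rewrite mulNmx => /vleN2 Mp.
  by apply: dual_infeasible; exists p.
apply: unbounded_along_ray y0_ge0 My0 e_ge0 _ _.
- by move: Me; rewrite linearN /= trmxK mulNmx => /oppv_le0.
- by move: ce; rewrite ipNl oppr_gt0.
Qed.

Lemma dual_certificate_le {m n} {M : 'M[R]_(m, n)} {r c y0 p0 a b} {t : R} :
  vle 0 y0 -> vle r (M *m y0) -> vle 0 p0 -> vle (M^T *m p0) c ->
  vle 0 a -> vle 0 b -> 0 <= t -> vle (M^T *m a) (t *: c) -> vle (t *: r) (M *m b) ->
  ip r a <= ip c b.
Proof.
move=> y0_ge0 My0 p0_ge0 Mp0 a_ge0 b_ge0; rewrite le0r => /orP [/eqP ->|t_gt0] Ma Mb.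
  rewrite !scale0r in Ma Mb.
  have := weak_duality y0_ge0 a_ge0 My0 Ma; have := weak_duality b_ge0 p0_ge0 Mb Mp0.
  by rewrite !ip0l => cb_ge0 ra_le0; exact: le_trans ra_le0 cb_ge0.
by have := weak_duality b_ge0 a_ge0 Mb Ma; rewrite !ipZl ler_pM2l.
Qed.

(* Farkas for the joint system  M y >= r, -M^T p >= -c, r^T p - c^T y >= 0
   in (y, p) >= 0: an infeasibility certificate contradicts weak duality
   ([dual_certificate_le]). *)
Lemma strong_duality {m n} {M : 'M[R]_(m, n)} {r c} :
  (exists y, vle 0 y /\ vle r (M *m y)) -> (exists p, vle 0 p /\ vle (M^T *m p) c) ->
  exists y p, [/\ vle 0 y, vle r (M *m y), vle 0 p, vle (M^T *m p) c & ip c y <= ip r p].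
Proof.
move=> [y0 [y0_ge0 My0]] [p0 [p0_ge0 Mp0]]; apply: contrapT => no_pair.
pose J := col_mx (block_mx M 0 0 (- M^T)) (row_mx (- c^T) r^T).
pose rJ : 'cV_(m + n + 1) := col_mx (col_mx r (- c)) 0.
have [g [g_ge0 Jg rg]] : exists g, [/\ vle 0 g, vle (J^T *m g) 0 & 0 < ip rJ g].
  apply: farkas => -[z []]; rewrite -[z]vsubmxK -col_mx0 => /vle_col_mx [y_ge0 p_ge0].
  rewrite mul_col_mx mul_block_col mul_row_col !mul0mx addr0 add0r.
  move=> /vle_col_mx [/vle_col_mx [My]]; rewrite mulNmx => /vleN2 Mp /(_ 0).
  rewrite mxE [X in _ <= X]mxE mulNmx [X in _ <= X + _]mxE addrC subr_ge0 => cyrp.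
  by apply: no_pair; exists (usubmx z), (dsubmx z).
rewrite -[g]vsubmxK -[usubmx g]vsubmxK in g_ge0 Jg rg.
move: g_ge0; rewrite -col_mx0 => /vle_col_mx [+ /vle_ge0 /(_ 0) t_ge0].
rewrite -col_mx0 => /vle_col_mx [a_ge0 b_ge0].
move: Jg; rewrite tr_col_mx tr_block_mx tr_row_mx !trmx0 !linearN /= !trmxK.
rewrite mul_row_col mul_block_col mul_col_mx !mul0mx addr0 add0r add_col_mx.
rewrite [dsubmx g]mx11_scalar !mul_mx_scalar scalerN mulNmx -!col_mx0.
move=> /vle_col_mx [/subv_le0 Ma]; rewrite addrC => /subv_le0 Mb.
move: rg; rewrite !ip_col_mx ip0l addr0 ipNl subr_gt0 => cb_lt_ra.
have := dual_certificate_le y0_ge0 My0 p0_ge0 Mp0 a_ge0 b_ge0 t_ge0 Ma Mb.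
by rewrite leNgt cb_lt_ra.
Qed.

Lemma convex_comb_eq_upper (t a b u : R) : 0 < t < 1 -> a <= u -> b <= u ->
  t * a + (1 - t) * b = u -> a = u /\ b = u.
Proof.
move=> /andP [t_gt0 t_lt1] au bu abu.
have ua_ge0 : 0 <= t * (u - a) by rewrite mulr_ge0 ?subr_ge0 // ltW.
have ub_ge0 : 0 <= (1 - t) * (u - b) by rewrite mulr_ge0 ?subr_ge0 // ltW.
have /eqP : t * (u - a) + (1 - t) * (u - b) = 0 by rewrite -abu; ring.
rewrite paddr_eq0 // !mulf_eq0 gt_eqF //= !subr_eq0 [1 == t]eq_sym (lt_eqF t_lt1) /=.
by case/andP => /eqP ua /eqP ub.
Qed.

Definition polyhedron {k n} (A : 'M[R]_(k, n)) (b : 'cV[R]_k) := [set x | vle (A *m x) b].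

Section ExtremePoints.
Variables (k n : nat) (A : 'M[R]_(k, n)) (b : 'cV[R]_k) (c : 'cV[R]_n).
Hypothesis A_inj : forall d : 'cV[R]_n, A *m d = 0 -> d = 0.
Hypothesis c_bounded : exists K, forall x, polyhedron A b x -> ip c x <= K.

Definition slack_rows (x : 'cV[R]_n) : {set 'I_k} := [set i | (A *m x) i 0 != b i 0]%SET.

Definition keeps_tight (x e : 'cV[R]_n) :=
  forall i, (A *m x) i 0 = b i 0 -> (A *m e) i 0 = 0.

Lemma non_extreme_direction {x} : polyhedron A b x -> ~ extreme_point (polyhedron A b) x ->
  exists2 e, e != 0 & keeps_tight x e.
Proof.
move=> Px not_extreme.
have [p1 [p2 [t [Pp1 Pp2 t01 xE p12]]]] : exists p1 p2 t,
    [/\ polyhedron A b p1, polyhedron A b p2, 0 < t < 1, x = t *: p1 + (1 - t) *: p2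
      & p1 <> p2].
  apply: contrapT => no_seg; apply: not_extreme; split => // p1 p2 t P1 P2 t01 xE.
  by apply: contrapT => p12; apply: no_seg; exists p1, p2, t.
exists (p1 - p2); first by rewrite subr_eq0; apply/eqP.
move=> i tight; rewrite mulmxBr [_ i 0]mxE [(- (A *m p2)) i 0]mxE.
have [-> ->] : (A *m p1) i 0 = b i 0 /\ (A *m p2) i 0 = b i 0; last by rewrite subrr.
apply: convex_comb_eq_upper t01 (Pp1 i) (Pp2 i) _.
by rewrite -tight xE mulmx_comb_entry.
Qed.

Lemma oriented_direction {x d} : d != 0 -> keeps_tight x d ->
  exists e, [/\ keeps_tight x e, 0 <= ip c e & ip c e = 0 -> exists i, 0 < (A *m e) i 0].
Proof.
move=> d_neq0 d_tight.
have [i Adi] : exists i, (A *m d) i 0 != 0.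
  apply: contrapT => Ad0; apply/(negP d_neq0)/eqP/A_inj/matrixP => i j.
  by rewrite (ord1 j) [RHS]mxE; apply: contrapT => /eqP ?; apply: Ad0; exists i.
have Nd_tight : keeps_tight x (- d).
  by move=> j /d_tight; rewrite mulmxN [(- (A *m d)) j 0]mxE => ->; rewrite oppr0.
have [cd_gt0|cd_lt0|cd0] := ltrgtP (ip c d) 0.
- by exists (- d); split; rewrite ?ipNr ?oppr_ge0 ?ltW // => /eqP; rewrite oppr_eq0 lt_eqF.
- by exists d; split; rewrite ?ltW // => /eqP; rewrite gt_eqF.
- case/lt_total/orP: Adi => [Adi_lt0|Adi_gt0].
    exists (- d); split; rewrite ?ipNr ?cd0 ?oppr0 //.
    by exists i; rewrite mulmxN [(- (A *m d)) i 0]mxE oppr_gt0.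
  by exists d; split; rewrite ?cd0 //; exists i.
Qed.

Lemma improving_direction {x} : polyhedron A b x -> ~ extreme_point (polyhedron A b) x ->
  exists e, [/\ keeps_tight x e, 0 <= ip c e & exists i, 0 < (A *m e) i 0].
Proof.
move=> Px /(non_extreme_direction Px) [d d_neq0 /(oriented_direction d_neq0)].
move=> [e [e_tight ce_ge0 ce0]]; exists e; split => //.
have [/ce0 //|ce_neq0] := eqVneq (ip c e) 0.
have ce_gt0 : 0 < ip c e by rewrite lt0r ce_neq0.
apply: contrapT => Ae_le0; have [K cK] := c_bounded.
pose s := (`|K - ip c x| + 1) / ip c e.
have s_ge0 : 0 <= s by rewrite divr_ge0 ?addr_ge0 // ltW.
have P_xse : polyhedron A b (x + s *: e).
  move=> i; rewrite mulmx_addZ_entry -[b i 0]addr0; apply: lerD (Px i) _.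
  by rewrite mulr_ge0_le0 // leNgt; apply/negP => ?; apply: Ae_le0; exists i.
have := cK _ P_xse; rewrite ipDr ipZr /s mulfVK ?gt_eqF //.
by have := ler_norm (K - ip c x); lra.
Qed.

Lemma ratio_step {x e} : polyhedron A b x -> keeps_tight x e -> 0 <= ip c e ->
  (exists i, 0 < (A *m e) i 0) ->
  exists x', [/\ polyhedron A b x', ip c x <= ip c x' &
    (#|slack_rows x'| < #|slack_rows x|)%N].
Proof.
move=> Px e_tight ce_ge0 [i0 Ae_i0].
pose ratio i := (b i 0 - (A *m x) i 0) / (A *m e) i 0.
case: (@arg_minP _ _ _ i0 (fun i => 0 < (A *m e) i 0) ratio Ae_i0) => i Ae_i ratio_min.
have s_ge0 : 0 <= ratio i by rewrite divr_ge0 ?subr_ge0 ?Px ?ltW.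
exists (x + ratio i *: e); split.
- move=> j; rewrite mulmx_addZ_entry; case: (ltP 0 ((A *m e) j 0)) => Ae_j.
    by have := ratio_min j Ae_j; rewrite /ratio ler_pdivlMr // => ?; lra.
  by have := Px j; have := mulr_ge0_le0 s_ge0 Ae_j; lra.
- by rewrite ipDr ipZr lerDl mulr_ge0.
- apply/proper_card/properP; split.
    apply/fintype.subsetP => j; rewrite !inE; apply: contraNN => /eqP tight_j.
    by rewrite mulmx_addZ_entry e_tight ?mulr0 ?addr0 ?tight_j.
  exists i; rewrite !inE; last first.
    by rewrite negbK mulmx_addZ_entry /ratio divfK ?lt0r_neq0 // subrKC.
  by apply/eqP => /e_tight Ae0; move: Ae_i; rewrite Ae0 ltxx.
Qed.

Lemma exists_extreme_point_ge x0 : polyhedron A b x0 ->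
  exists x, extreme_point (polyhedron A b) x /\ ip c x0 <= ip c x.
Proof.
move=> Px0; have [N] := ubnP #|slack_rows x0|.
elim: N x0 Px0 => // N IH x Px slack_lt.
have [extreme|not_extreme] := EM (extreme_point (polyhedron A b) x); first by exists x.
have [e [e_tight ce_ge0 Ae_pos]] := improving_direction Px not_extreme.
have [x' [Px' cxx' slack_lt']] := ratio_step Px e_tight ce_ge0 Ae_pos.
have [x'' [extreme'' cx'x'']] := IH x' Px' (leq_trans slack_lt' slack_lt).
by exists x''; split => //; exact: le_trans cx'x''.
Qed.

End ExtremePoints.

Lemma nonneg_polyhedronE {k n} (B : 'M[R]_(k, n)) (b : 'cV[R]_k) :
  [set x | vle 0 x /\ vle (B *m x) b] = polyhedron (col_mx (- 1%:M) B) (col_mx 0 b).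
Proof.
apply/seteqP; split => x /=; rewrite /polyhedron /= mul_col_mx mulNmx mul1mx.
- by move=> [x_ge0 Bx]; apply/vle_col_mx; split => //; exact/oppv_le0.
- by move=> /vle_col_mx [/oppv_le0 x_ge0 Bx].
Qed.

Lemma nonneg_polyhedron_inj {k n} (B : 'M[R]_(k, n)) (d : 'cV[R]_n) :
  col_mx (- 1%:M) B *m d = 0 -> d = 0.
Proof.
rewrite mul_col_mx -col_mx0 => /eq_col_mx [+ _]; rewrite mulNmx mul1mx.
by move/eqP; rewrite oppr_eq0 => /eqP.
Qed.

Definition sumv {n} (u : 'cV[R]_n) := ip (const_mx 1) u.

Lemma sumv_ge0 {n} {u : 'cV[R]_n} : vle 0 u -> 0 <= sumv u.
Proof. by apply: ip_ge0; apply/vle_ge0 => i; rewrite mxE. Qed.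

Lemma sumv_gt0 {n} {u : 'cV[R]_n} : vle 0 u -> u != 0 -> 0 < sumv u.
Proof.
move=> u_ge0 u_neq0; rewrite lt0r sumv_ge0 // andbT.
apply/eqP => u0; apply/(negP u_neq0)/eqP/matrixP => i j; rewrite (ord1 j) [RHS]mxE.
have := ip_eq0_mul _ u_ge0 u0 i; rewrite mxE mul1r; apply.
by apply/vle_ge0 => l; rewrite mxE.
Qed.

Lemma entry_le_sumv {n} (u : 'cV[R]_n) i : vle 0 u -> u i 0 <= sumv u.
Proof.
move=> /vle_ge0 u_ge0; rewrite /sumv ipE (bigD1 i) //= mxE mul1r lerDl.
by apply: sumr_ge0 => j _; rewrite mxE mul1r.
Qed.

Definition slice {n} (C : set 'cV[R]_n) := [set g | C g /\ sumv g = 1].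

Section ConeSlice.
Context {n : nat} {C : set 'cV[R]_n}.
Hypothesis C_ge0 : forall g, C g -> vle 0 g.
Hypothesis C_scale : forall (s : R) g, 0 <= s -> C g -> C (s *: g).

Lemma slice_normalize {g} : C g -> g != 0 -> slice C ((sumv g)^-1 *: g).
Proof.
move=> Cg g_neq0; have sg_gt0 := sumv_gt0 (C_ge0 _ Cg) g_neq0.
by split; [apply: C_scale; rewrite ?invr_ge0 ?ltW | rewrite /sumv ipZr mulVf ?gt_eqF].
Qed.

Lemma extreme_ray_of_slice g : extreme_point (slice C) g -> extreme_ray C g.
Proof.
move=> [[Cg sg1] ext]; split => //.
  by apply: contra_eq_neq sg1 => ->; rewrite /sumv ip0r eq_sym oner_neq0.
move=> g1 g2 C1 C2 gE.
have s12 : sumv g1 + sumv g2 = 1 by rewrite /sumv -ipDr -gE.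
have [g10|g1_neq0] := eqVneq g1 0.
  by split; [exists 0; rewrite ?scale0r | exists 1; rewrite ?scale1r // gE g10 add0r].
have [g20|g2_neq0] := eqVneq g2 0.
  by split; [exists 1; rewrite ?scale1r // gE g20 addr0 | exists 0; rewrite ?scale0r].
have s1_gt0 := sumv_gt0 (C_ge0 _ C1) g1_neq0; have s2_gt0 := sumv_gt0 (C_ge0 _ C2) g2_neq0.
have s1_neq0 := lt0r_neq0 s1_gt0; have s2_neq0 := lt0r_neq0 s2_gt0.
have h12 : (sumv g1)^-1 *: g1 = (sumv g2)^-1 *: g2.
  apply: (ext _ _ (sumv g1) (slice_normalize C1 g1_neq0) (slice_normalize C2 g2_neq0)).
    by rewrite s1_gt0 -s12 ltrDl.
  by rewrite (_ : 1 - sumv g1 = sumv g2) ?scalerKV // -s12 addrAC subrr add0r.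
have gE1 : g = (sumv g1)^-1 *: g1.
  rewrite gE -[g1 in LHS](scalerKV s1_neq0) -[g2 in LHS](scalerKV s2_neq0) -h12.
  by rewrite -scalerDl s12 scale1r.
split; [exists (sumv g1) | exists (sumv g2)]; rewrite ?ltW //.
  by rewrite gE1 scalerKV.
by rewrite gE1 h12 scalerKV.
Qed.

End ConeSlice.

Lemma vle1 (a b : 'cV[R]_1) : vle a b <-> a 0 0 <= b 0 0.
Proof. by split => [|ab i]; [apply|rewrite (ord1 i)]. Qed.

Lemma const_mulmxE {n} (u : 'cV[R]_n) : ((const_mx 1 : 'rV[R]_n) *m u) 0 0 = sumv u.
Proof. by rewrite /sumv /ip trmx_const. Qed.

Section SecondStageDual.
Variable D : data R.

Lemma recPi_ge0 {g} : recPi D g -> vle 0 g. Proof. by case. Qed.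

Lemma recPi_scale {s : R} {g} : 0 <= s -> recPi D g -> recPi D (s *: g).
Proof.
move=> s_ge0 [g_ge0 Bg]; rewrite /recPi /= -scalemxAr.
by split; rewrite -(scaler0 _ s); exact: vleZ.
Qed.

Lemma slice_recPiE : slice (recPi D) = polyhedron
  (col_mx (- 1%:M) (col_mx (B2 D)^T (col_mx (const_mx 1) (- const_mx 1))))
  (col_mx 0 (col_mx 0 (col_mx 1 (- 1)))).
Proof.
rewrite -nonneg_polyhedronE; apply/seteqP; split => g /=.
- move=> [[g_ge0 Bg] sg1]; split => //; rewrite !mul_col_mx !mulNmx.
  apply/vle_col_mx; split => //; apply/vle_col_mx; split; apply/vle1.
    by rewrite const_mulmxE sg1 mxE.
  by rewrite !oppmx_entry const_mulmxE sg1 mxE.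
- rewrite !mul_col_mx !mulNmx => -[g_ge0 /vle_col_mx [Bg /vle_col_mx [/vle1 + /vle1]]].
  rewrite !oppmx_entry const_mulmxE !mxE lerN2 => sg_le1 sg_ge1.
  by split; [|apply/eqP; rewrite eq_le sg_ge1 sg_le1].
Qed.

Lemma exists_extreme_ray {r g : 'cV[R]_(mY D)} : recPi D g -> 0 < ip r g ->
  exists2 g', extreme_ray (recPi D) g' & 0 < ip r g'.
Proof.
move=> Cg rg_gt0.
have g_neq0 : g != 0 by apply: contraTneq rg_gt0 => ->; rewrite ip0r ltxx.
have [h [h_ext rh]] : exists h, extreme_point (slice (recPi D)) h /\
    ip r ((sumv g)^-1 *: g) <= ip r h.
  rewrite slice_recPiE; apply: exists_extreme_point_ge.
  - exact: nonneg_polyhedron_inj.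
  - exists (\sum_i `|r i 0|) => x; rewrite -slice_recPiE => -[[/vle_ge0 x_ge0 _] sx1].
    rewrite ipE; apply: ler_sum => i _; apply: le_trans (ler_norm _) _.
    rewrite normrM (ger0_norm (x_ge0 i)) -[leRHS]mulr1 ler_wpM2l // -sx1.
    exact/entry_le_sumv/vle_ge0.
  - by rewrite -slice_recPiE; exact: (slice_normalize (@recPi_ge0) (@recPi_scale)).
exists h; first exact: (extreme_ray_of_slice (@recPi_ge0) (@recPi_scale)).
by apply: lt_le_trans rh; rewrite ipZr mulr_gt0 // invr_gt0 (sumv_gt0 (recPi_ge0 Cg)).
Qed.

Lemma exists_extreme_point_Pi {r w : 'cV[R]_(mY D)} {K} : Pi D w ->
  (forall p, Pi D p -> ip r p <= K) -> exists p, extreme_point (Pi D) p /\ ip r w <= ip r p.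
Proof.
rewrite /Pi nonneg_polyhedronE => Pw r_bounded.
by apply: exists_extreme_point_ge => //; [exact: nonneg_polyhedron_inj | exists K].
Qed.

End SecondStageDual.

Definition lp_feasible {k n} (F : 'M[R]_(k, n)) (s : 'cV[R]_k) u := vle 0 u /\ vle (F *m u) s.

Lemma lp_feasibleE {k n} (F : 'M[R]_(k, n)) s u :
  lp_feasible F s u <-> vle 0 u /\ vle (- s) (- F *m u).
Proof. by rewrite /lp_feasible mulNmx; split => -[? /vleN2 ?]. Qed.

(* KKT conditions of  min { cc^T u : F u <= s, u >= 0 }  with multipliers [lam]
   for [F u <= s] and [mu] for [u >= 0]; [kkt D x p] is the instance
   F := F(x), s := h + G x, cc := E^T p. *)
Definition lp_kkt {k n} (F : 'M[R]_(k, n)) (s : 'cV[R]_k) (cc : 'cV[R]_n) u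
    (lam : 'cV[R]_k) (mu : 'cV[R]_n) :=
  [/\ lp_feasible F s u, vle 0 lam /\ vle 0 mu, F^T *m lam - mu = - cc,
      (forall i, lam i 0 * (s - F *m u) i 0 = 0) & (forall j, mu j 0 * u j 0 = 0)].

Lemma lp_kkt_optimal {k n} {F : 'M[R]_(k, n)} {s cc u lam mu} : lp_kkt F s cc u lam mu ->
  forall u', lp_feasible F s u' -> ip cc u <= ip cc u'.
Proof.
move=> [_ [lam_ge0 mu_ge0] stat cs_lam cs_mu] u' [u'_ge0 Fu'].
have ipcc v : ip cc v = ip mu v - ip (F *m v) lam.
  by rewrite -[cc]opprK -stat opprB ipDl ipNl ip_mulmx trmxK.
have slack_ge0 : 0 <= ip (s - F *m u') lam by rewrite ip_ge0 // subv_ge0.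
have mu_u'_ge0 : 0 <= ip mu u' by exact: ip_ge0.
have mu_u0 : ip mu u = 0 by rewrite ipE big1 // => j _; rewrite cs_mu.
have slack0 : ip (s - F *m u) lam = 0 by rewrite ipE big1 // => i _; rewrite mulrC cs_lam.
move: slack_ge0 slack0; rewrite !ipDl !ipNl !ipcc mu_u0; lra.
Qed.

Lemma lp_dual_feasible {k n} {F : 'M[R]_(k, n)} {s} cc : (exists u, lp_feasible F s u) ->
  (exists M, forall u, lp_feasible F s u -> forall j, `|u j 0| <= M) ->
  exists lam, vle 0 lam /\ vle ((- F)^T *m lam) cc.
Proof.
move=> [u0 Pu0] [M u_bounded]; apply: contrapT => dual_infeasible.
have [u [u_ge0 Fu]] := unbounded_of_dual_infeasible
  (ex_intro _ u0 (proj1 (lp_feasibleE F s u0) Pu0)) dual_infeasible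
  (- (\sum_j `|cc j 0|) * M).
rewrite ltNge => /negP; apply; rewrite ipE mulNr mulr_suml -sumrN.
apply: ler_sum => j _.
have cuM : `|cc j 0 * u j 0| <= `|cc j 0| * M.
  by rewrite normrM ler_wpM2l // u_bounded //; apply/lp_feasibleE.
by have := ler_norm (- (cc j 0 * u j 0)); rewrite normrN; lra.
Qed.

Lemma lp_kkt_exists {k n} {F : 'M[R]_(k, n)} {s} cc : (exists u, lp_feasible F s u) ->
  (exists M, forall u, lp_feasible F s u -> forall j, `|u j 0| <= M) ->
  exists u lam mu, lp_kkt F s cc u lam mu.
Proof.
move=> [u0 Pu0] u_bounded.
have [u [lam [u_ge0 Fu lam_ge0 Flam cu_le]]] :=
  strong_duality (ex_intro _ u0 (proj1 (lp_feasibleE F s u0) Pu0))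
    (lp_dual_feasible cc (ex_intro _ u0 Pu0) u_bounded).
have Pu : lp_feasible F s u by apply/lp_feasibleE.
pose mu := F^T *m lam + cc.
have mu_ge0 : vle 0 mu.
  by move/subv_ge0: Flam; rewrite linearN /= mulNmx opprK addrC.
have slack_ge0 : vle 0 (s - F *m u) by rewrite subv_ge0; case: Pu.
have cs_sum : ip lam (s - F *m u) + ip mu u <= 0.
  rewrite /mu ipDl ipDr ipNr [ip lam (F *m u)]ipC ip_mulmx.
  by move: cu_le; rewrite ipNl (ipC s) (ipC cc); lra.
have cs_lam := ip_ge0 lam_ge0 slack_ge0; have cs_mu := ip_ge0 mu_ge0 u_ge0.
exists u, lam, mu; split => //.
- by rewrite /mu opprD addrA subrr add0r.
- by apply: ip_eq0_mul lam_ge0 slack_ge0 _; lra.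
- by apply: ip_eq0_mul mu_ge0 u_ge0 _; lra.
Qed.

Section SecondStage.
Variable D : data R.
Implicit Types (x : 'cV[R]_(mx D + nx D)) (u v : 'cV[R]_(nu D)) (y : 'cV[R]_(ny D)).
Implicit Types (p g : 'cV[R]_(mY D)).

Definition second_rhs x u := d D - B1 D *m x - E D *m u.

Lemma ip_second_rhs x u p : ip (second_rhs x u) p = ip (d D - B1 D *m x) p + lobj D p u.
Proof. by rewrite /second_rhs ipDl. Qed.

Lemma in_argmax_rhs {x p u v} : in_argmax D x p v -> Uset D x u ->
  ip (second_rhs x u) p <= ip (second_rhs x v) p.
Proof. by move=> [_ v_max] Uu; rewrite !ip_second_rhs lerD2l v_max. Qed.

Lemma Yset_weak_duality {x u y p} : Yset D x u y -> Pi D p ->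
  ip (second_rhs x u) p <= sc (c2 D) y.
Proof. by move=> [y_ge0 By] [p_ge0 Bp]; rewrite sc_ip (weak_duality y_ge0 p_ge0 By Bp). Qed.

Lemma Yset_recPi {x u y g} : Yset D x u y -> recPi D g -> ip (second_rhs x u) g <= 0.
Proof.
by move=> [y_ge0 By] [g_ge0 Bg]; have := weak_duality y_ge0 g_ge0 By Bg; rewrite ip0l.
Qed.

Lemma lobjE p u : lobj D p u = - ip ((E D)^T *m p) u.
Proof. by rewrite /lobj ipNl ip_mulmx. Qed.

Lemma kkt_in_argmax {x p u lam mu} : kkt D x p u lam mu -> in_argmax D x p u.
Proof.
move=> KKT; have [Uu _ _ _ _] := KKT; split => // u' Uu'.
by rewrite !lobjE lerN2 (lp_kkt_optimal KKT).
Qed.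

Lemma kkt_exists x p : Uset D x !=set0 ->
  (exists M, forall u, Uset D x u -> forall j, `|u j 0| <= M) ->
  exists u lam mu, kkt D x p u lam mu.
Proof. exact: lp_kkt_exists. Qed.

End SecondStage.

Section Reformulation.
Context {D : data R} {PP RR : seq 'cV[R]_(mY D)}.
Hypothesis PP_extreme : forall p, p \in PP <-> extreme_point (Pi D) p.
Hypothesis RR_rays : forall g, extreme_ray (recPi D) g -> exists2 t : R, 0 < t & t *: g \in RR.
Hypothesis U_nonempty : forall x, Xset D x -> Uset D x !=set0.
Hypothesis U_bounded : forall x, Xset D x -> exists M : R,
  forall u, Uset D x u -> forall j, `|u j 0| <= M.

Lemma Yset_nonempty x u :
  (forall g, g \in RR -> exists v y, Yset D x v y /\ in_argmax D x g v) ->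
  Uset D x u -> exists y, Yset D x u y.
Proof.
move=> RR_ok Uu; apply: contrapT => Y_empty.
have [g [g_ge0 Bg rg_gt0]] := farkas (B2 D) (second_rhs D x u) Y_empty.
have [g' g'_ray rg'_gt0] := exists_extreme_ray D (conj g_ge0 Bg) rg_gt0.
have [t t_gt0 tg'_RR] := RR_rays _ g'_ray.
have [v [y [Yy v_max]]] := RR_ok _ tg'_RR.
have [g'_rec _ _] := g'_ray.
have := le_trans (in_argmax_rhs D v_max Uu)
  (Yset_recPi D Yy (recPi_scale D (ltW t_gt0) g'_rec)).
by rewrite ipZr leNgt mulr_gt0.
Qed.

Lemma second_stage_le x u eta : (exists y, Yset D x u y) ->
  (forall p, extreme_point (Pi D) p -> ip (second_rhs D x u) p <= eta) ->
  exists2 y, Yset D x u y & sc (c2 D) y <= eta.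
Proof.
move=> Y_nonempty vertex_le.
have [Pi_nonempty|Pi_empty] := EM (exists p, Pi D p).
- have [y [w [y_ge0 By w_ge0 Bw cyw]]] := strong_duality Y_nonempty Pi_nonempty.
  have [ps [ps_ext wps]] := exists_extreme_point_Pi D (conj w_ge0 Bw)
    (fun p Pp => Yset_weak_duality D (conj y_ge0 By) Pp).
  exists y; first by split.
  by rewrite sc_ip (le_trans cyw) // (le_trans wps) // vertex_le.
- have [y [y_ge0 By cy]] := unbounded_of_dual_infeasible Y_nonempty Pi_empty eta.
  by exists y; [split | rewrite sc_ip ltW].
Qed.

Lemma ref_feas_Phi_le x eta : ref_feas D PP RR x eta -> (Phi D x <= eta%:E)%E.
Proof.
move=> [Xx [up [yp [vg [yg [PP_ok RR_ok]]]]]].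
apply: ge_ereal_sup => _ [u Uu <-].
have Y_nonempty : exists y, Yset D x u y.
  by apply: Yset_nonempty Uu => g /RR_ok [Yg g_max]; exists (vg g), (yg g).
have [y Yy cy_le] : exists2 y, Yset D x u y & sc (c2 D) y <= eta.
  apply: second_stage_le Y_nonempty _ => p p_ext.
  have [cyp_le Yp up_max] := PP_ok p (proj2 (PP_extreme p) p_ext).
  apply: le_trans (in_argmax_rhs D up_max Uu) (le_trans _ cyp_le).
  exact: (Yset_weak_duality D Yp (proj1 p_ext)).
apply: (@le_trans _ _ (sc (c2 D) y)%:E); last by rewrite lee_fin.
by apply: ereal_inf_lbound; exists y.
Qed.

Lemma Yset_nonempty_of_Qval {x u} {eta : R} : (Qval D x u <= eta%:E)%E ->
  exists y, Yset D x u y.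
Proof.
move=> Q_le; apply: contrapT => Y_empty.
have Y0 : Yset D x u = set0 by apply/seteqP; split => y //= Yy; apply: Y_empty; exists y.
by move: Q_le; rewrite /Qval Y0 image_set0 ereal_inf0 leNgt ltey.
Qed.

Lemma Qval_attained {x u} : (exists y, Yset D x u y) -> (exists p, Pi D p) ->
  exists2 y, Yset D x u y & ((sc (c2 D) y)%:E <= Qval D x u)%E.
Proof.
move=> Y_nonempty Pi_nonempty.
have [y [w [y_ge0 By w_ge0 Bw cyw]]] := strong_duality Y_nonempty Pi_nonempty.
exists y; first by split.
apply: le_ereal_inf_tmp => _ [y' Yy' <-]; rewrite lee_fin sc_ip.
exact: le_trans cyw (Yset_weak_duality D Yy' (conj w_ge0 Bw)).
Qed.

Lemma kkt_witness {x eta} : Xset D x -> (Phi D x <= eta%:E)%E -> forall p,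
  exists q : 'cV[R]_(nu D) * 'cV[R]_(ny D) * 'cV[R]_(mU D) * 'cV[R]_(nu D),
    [/\ kkt D x p q.1.1.1 q.1.2 q.2, Yset D x q.1.1.1 q.1.1.2 &
        Pi D p -> sc (c2 D) q.1.1.2 <= eta].
Proof.
move=> Xx Phi_le p.
have [u [lam [mu KKT]]] := kkt_exists D x p (U_nonempty _ Xx) (U_bounded _ Xx).
have [Uu _ _ _ _] := KKT.
have Q_le : (Qval D x u <= eta%:E)%E.
  by apply: le_trans Phi_le; apply: ereal_sup_ubound; exists u.
have [y0 Yy0] := Yset_nonempty_of_Qval Q_le.
have [Pp|not_Pp] := EM (Pi D p); last by exists (u, y0, lam, mu).
have [y Yy cy_le] := Qval_attained (ex_intro _ y0 Yy0) (ex_intro _ p Pp).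
by exists (u, y, lam, mu); split => // _; rewrite -lee_fin (le_trans cy_le).
Qed.

Lemma Phi_le_ref_feas_kkt x eta : Xset D x -> (Phi D x <= eta%:E)%E ->
  ref_feas_kkt D PP RR x eta.
Proof.
move=> Xx Phi_le; have [f f_ok] := choice (kkt_witness Xx Phi_le).
split => //.
do 2 exists (fun p => (f p).1.1.1), (fun p => (f p).1.1.2),
  (fun p => (f p).1.2), (fun p => (f p).2).
split => [p /PP_extreme [Pp _]|g _].
  by have [KKT Yp cy_le] := f_ok p; split; auto.
by have [] := f_ok g.
Qed.

Lemma ref_feas_kkt_feas x eta : ref_feas_kkt D PP RR x eta -> ref_feas D PP RR x eta.
Proof.
move=> [Xx [up [yp [lp [mp [vg [yg [lg [mg [PP_ok RR_ok]]]]]]]]]]; split => //.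
exists up, yp, vg, yg; split.
- by move=> p /PP_ok [cy_le Yp KKT]; split => //; exact: (kkt_in_argmax D KKT).
- by move=> g /RR_ok [Yg KKT]; split => //; exact: (kkt_in_argmax D KKT).
Qed.

Lemma ref_feasE x eta : ref_feas D PP RR x eta <-> Xset D x /\ (Phi D x <= eta%:E)%E.
Proof.
split => [feas|[Xx Phi_le]]; first by split; [case: feas | exact: ref_feas_Phi_le].
exact/ref_feas_kkt_feas/Phi_le_ref_feas_kkt.
Qed.

Lemma ref_feas_kktE x eta : ref_feas_kkt D PP RR x eta <-> Xset D x /\ (Phi D x <= eta%:E)%E.
Proof.
split => [/ref_feas_kkt_feas /ref_feasE //|[Xx Phi_le]].
exact: Phi_le_ref_feas_kkt.
Qed.

End Reformulation.

Lemma ereal_le_all_Ny (v : \bar R) : (forall r : R, (v <= r%:E)%E) -> v = -oo%E.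
Proof.
case: v => [r||] // v_le; first by have := v_le (r - 1)%R; rewrite lee_fin => ?; exfalso; lra.
by have := v_le 0; rewrite leNgt ltey.
Qed.

Section Values.
Context {D : data R} {feas : 'cV[R]_(mx D + nx D) -> R -> Prop}.
Hypothesis feasE : forall x eta, feas x eta <-> Xset D x /\ (Phi D x <= eta%:E)%E.

Lemma ref_value_wstar : ref_value D feas = wstar D.
Proof.
apply/eqP; rewrite eq_le; apply/andP; split.
- apply: le_ereal_inf_tmp => _ [x Xx <-].
  have ref_le eta : (Phi D x <= eta%:E)%E -> (ref_value D feas <= (sc (c1 D) x + eta)%:E)%E.
    by move=> Phi_le; apply: ereal_inf_lbound; exists (x, eta) => //; apply/feasE.
  case E : (Phi D x) => [r||]; first by rewrite -EFinD ref_le ?E.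
    by rewrite addey ?leey.
  rewrite addeNy leeNy_eq; apply/eqP/ereal_le_all_Ny => r.
  by rewrite -[r](addrNK (sc (c1 D) x)) addrC ref_le // E leNye.
- apply: le_ereal_inf_tmp => _ [[x eta] /= /feasE [Xx Phi_le] <-].
  apply: le_trans (ereal_inf_lbound _) _; first by exists x.
  by rewrite EFinD leeD2lE.
Qed.

Lemma robust_opt_ref_opt x : robust_opt D x <-> ref_opt D feas x.
Proof.
split.
- move=> [Xx opt fin].
  have Phi_fin : Phi D x \is a fin_num by move: fin; rewrite -opt fin_numD => /andP [].
  exists (fine (Phi D x)); split; first by apply/feasE; rewrite fineK.
  by rewrite ref_value_wstar EFinD fineK.
- move=> [eta [/feasE [Xx Phi_le] opt]]; split => //; last by rewrite -ref_value_wstar -opt.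
  apply/eqP; rewrite eq_le; apply/andP; split.
    by rewrite -ref_value_wstar -opt EFinD leeD2lE.
  by apply: ereal_inf_lbound; exists x.
Qed.

End Values.

End LinearProgramming.

Theorem theorem4 (R : realType) (D : data R) (PP RR : seq 'cV[R]_(mY D)) :
  (* P_Pi is the (finite) set of extreme points of Pi *)
  (forall p, p \in PP <-> extreme_point (Pi D) p) ->
  (* R_Pi is a finite set of representatives of the extreme rays of Pi *)
  (forall g, g \in RR -> extreme_ray (recPi D) g) ->
  (forall g, extreme_ray (recPi D) g -> exists2 t : R, 0 < t & t *: g \in RR) ->
  (* (A1) *) (forall x, Xset D x -> Uset D x !=set0) ->
  (* (A2) *) (forall x, Xset D x -> exists M : R,
                 forall u, Uset D x u -> forall j, `|u j 0| <= M) ->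
  (* (A3) *) joint_value D \is a fin_num ->
  (ref_value D (ref_feas D PP RR) = wstar D /\
     forall x, robust_opt D x <-> ref_opt D (ref_feas D PP RR) x) /\
  (ref_value D (ref_feas_kkt D PP RR) = wstar D /\
     forall x, robust_opt D x <-> ref_opt D (ref_feas_kkt D PP RR) x).
Proof.
(* Neither (A3) nor the extremality of the elements of RR is needed: values are
   compared in \bar R, and RR only has to meet every extreme ray. *)
move=> PP_extreme _ RR_rays U_nonempty U_bounded _.
have feasE := ref_feasE PP_extreme RR_rays U_nonempty U_bounded.
have kktE := ref_feas_kktE PP_extreme RR_rays U_nonempty U_bounded.
by split; split; [exact: ref_value_wstar | exact: robust_opt_ref_opt
  | exact: ref_value_wstar | exact: robust_opt_ref_opt].
Qed.
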